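(* Let $G$ be an edge transitive graph with at least one edge, and let $\lambda$ and $\tau$ be the greatest and least eigenvalues of its adjacency matrix. Then \[\chi_{vec}(G)=\bar{\vartheta}(G)=1-\frac{\lambda}{\tau}.\]
   Context: Graphs are finite, simple and undirected. For a real $k>1$, a vector $k$-coloring of $G$ is a map $\varphi$ from $V(G)$ to the unit sphere of some $\mathbb{R}^d$ with $\varphi(u)^T\varphi(v)\le -\frac1{k-1}$ whenever $u\sim v$, and $\chi_{vec}(G)$ is the smallest such $k$. A strict vector $k$-coloring is such a map with $\varphi(u)^T\varphi(v)=-\frac1{k-1}$ whenever $u\sim v$, and $\bar{\vartheta}(G)$ is the smallest such $k$ (equivalently the Lovász theta function of the complement of $G$). *)

From HB Require Import structures.
From mathcomp Require Import all_boot all_order all_algebra all_fingroup.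
From mathcomp Require Import reals.
Set Implicit Arguments. Unset Strict Implicit. Unset Printing Implicit Defensive.
Import Order.TTheory GRing.Theory Num.Theory.
Local Open Scope ring_scope.

Definition simple_graph (n : nat) (e : rel 'I_n) : Prop :=
  symmetric e /\ irreflexive e.

Definition graph_aut (n : nat) (e : rel 'I_n) (s : {perm 'I_n}) : Prop :=
  forall u v, e (s u) (s v) = e u v.

Definition edge_transitive (n : nat) (e : rel 'I_n) : Prop :=
  forall u v x y, e u v -> e x y ->
    exists s : {perm 'I_n}, graph_aut e s /\
      ((s u = x /\ s v = y) \/ (s u = y /\ s v = x)).

Definition adjmx (R : realType) (n : nat) (e : rel 'I_n) : 'M[R]_n :=
  \matrix_(i, j) (e i j)%:R.

Definition dotv (R : realType) (d : nat) (x y : 'rV[R]_d) : R :=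
  \sum_(i < d) x 0 i * y 0 i.

Definition vec_colorable (R : realType) (n : nat) (e : rel 'I_n) (k : R) : Prop :=
  1 < k /\ exists (d : nat) (phi : 'I_n -> 'rV[R]_d),
    (forall u, dotv (phi u) (phi u) = 1) /\
    (forall u v, e u v -> dotv (phi u) (phi v) <= - (k - 1)^-1).

Definition strict_vec_colorable (R : realType) (n : nat) (e : rel 'I_n) (k : R) : Prop :=
  1 < k /\ exists (d : nat) (phi : 'I_n -> 'rV[R]_d),
    (forall u, dotv (phi u) (phi u) = 1) /\
    (forall u v, e u v -> dotv (phi u) (phi v) = - (k - 1)^-1).

Definition is_least (R : realType) (P : R -> Prop) (c : R) : Prop :=
  P c /\ forall k, P k -> c <= k.

(* chi_vec(G) = c  and  thetabar(G) = c. *)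
Definition vec_chromatic_number_is (R : realType) (n : nat) (e : rel 'I_n) (c : R) :=
  is_least (vec_colorable e) c.
Definition strict_vec_chromatic_number_is (R : realType) (n : nat) (e : rel 'I_n) (c : R) :=
  is_least (strict_vec_colorable e) c.

Definition greatest_eigenvalue (R : realType) (n : nat) (A : 'M[R]_n) (l : R) : Prop :=
  eigenvalue A l /\ forall m, eigenvalue A m -> m <= l.
Definition least_eigenvalue (R : realType) (n : nat) (A : 'M[R]_n) (t : R) : Prop :=
  eigenvalue A t /\ forall m, eigenvalue A m -> t <= m.

From HB Require Import structures.
From mathcomp Require Import all_boot all_order all_algebra all_fingroup.
From mathcomp Require Import reals complex ring lra.
Import Order.TTheory GRing.Theory Num.Theory.
Local Open Scope ring_scope.
Set Implicit Arguments. Unset Strict Implicit. Unset Printing Implicit Defensive.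

(* Lower bound: for a vector k-colouring phi and a lambda-eigenvector v, apply
   the Rayleigh bound for tau to each coordinate function i |-> |v i| phi_i(t)
   and sum over t; as |v| does not decrease the adjacency form, this gives
   tau <= -lambda/(k-1).
   Upper bound: for a tau-eigenvector w, sum the Gram matrices of w o s over
   all automorphisms s.  By edge transitivity the summed matrix F is constant
   on edges, and so is F_xx F_yy, hence the normalised rows of F form a strict
   vector colouring with edge inner product beta = F_uv / sqrt (F_uu F_vv).
   The adjacency form of x |-> sqrt F_xx equals tau/beta times its norm, so
   the Rayleigh bound for lambda gives beta lambda <= tau, which is
   1 - 1/beta <= 1 - lambda/tau.  The signs are fixed by tau <= -1, obtained
   from the test vector 1_u - 1_v on an edge uv. *)

Section RealSymmetricMatrix.
Variables (R : realType) (n : nat) (A : 'M[R]_n).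
Hypothesis symA : A^T = A.

Local Notation "x %:C" := (real_complex R x).
Local Open Scope sesquilinear_scope.
Let AC := map_mx (real_complex R) A.

Lemma conjC_real_complex (r : R) : (r%:C)^* = r%:C.
Proof. by apply/eqP; rewrite -CrealE complex_real. Qed.

Lemma map_real_complex_hermitian : AC \is hermsymmx.
Proof.
apply/is_hermitianmxP; rewrite expr0 scale1r; apply/matrixP => i j.
by rewrite !mxE conjC_real_complex -[in LHS]symA mxE.
Qed.

Lemma eigenvalue_map_real_complex (r : R) : eigenvalue AC r%:C = eigenvalue A r.
Proof.
by rewrite !eigenvalue_root_char -map_char_poly fmorph_root.
Qed.

Let P := spectralmx AC.
Let d := spectral_diag AC.

Lemma spectral_decomposition_real : AC = P^t* *m diag_mx d *m P.
Proof.
have /orthomx_spectralP := hermitian_normalmx map_real_complex_hermitian.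
by rewrite invmx_unitary // spectral_unitarymx.
Qed.

Lemma spectral_diag_real_eigenvalue j : exists2 r, d 0 j = r%:C & eigenvalue A r.
Proof.
have dj_real := mxOverP (hermitian_spectral_diag_real map_real_complex_hermitian).
have /complex_realP[r djr] := dj_real 0 j.
exists r => //; rewrite -eigenvalue_map_real_complex; apply/eigenvalueP.
have Pu : P \is unitarymx := spectral_unitarymx AC.
exists (row j P).
  rewrite -row_mul {1}spectral_decomposition_real !mulmxA (unitarymxP Pu) mul1mx.
  by rewrite row_mul row_diag_mx -scalemxAl -rowE djr.
apply/eqP => /(congr1 (fun v => dotmx v v)).
by rewrite (row_unitarymxP Pu) eqxx dotmxE mul0mx mxE => /eqP; rewrite oner_eq0.
Qed.

Lemma quadform_spectral (x : 'rV[R]_n) : exists y : 'rV_n,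
  ((x *m A *m x^T) 0 0)%:C = \sum_j d 0 j * (y 0 j * (y 0 j)^*) /\
  ((x *m x^T) 0 0)%:C = \sum_j y 0 j * (y 0 j)^*.
Proof.
pose xC := map_mx (real_complex R) x.
have xCt : xC^t* = map_mx (real_complex R) x^T.
  by apply/matrixP => i j; rewrite !mxE conjC_real_complex.
have map00 (M : 'M[R]_1) : (M 0 0)%:C = map_mx (real_complex R) M 0 0.
  by rewrite mxE.
exists (xC *m P^t*); have yt : (xC *m P^t*)^t* = P *m xC^t*.
  by rewrite trmx_mul map_mxM trmxCK.
split.
- rewrite map00 !map_mxM -/AC -xCt spectral_decomposition_real -/xC !mulmxA.
  rewrite -[_ *m P *m _]mulmxA -yt mxE; apply: eq_bigr => j _.
  by rewrite mul_mx_diag !mxE mulrCA mulrA.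
rewrite map00 map_mxM -xCt -/xC.
rewrite -{1}[xC](mulmxKtV xC (spectral_unitarymx AC)) // -/P.
rewrite -[_ *m P *m _]mulmxA -yt mxE.
by apply: eq_bigr => j _; rewrite !mxE.
Qed.

Lemma rayleigh_bounds (a b : R) : (forall r, eigenvalue A r -> a <= r <= b) ->
  forall x : 'rV[R]_n,
    a * (x *m x^T) 0 0 <= (x *m A *m x^T) 0 0 <= b * (x *m x^T) 0 0.
Proof.
move=> eigab x; have [y [Ey Ny]] := quadform_spectral x.
apply/andP; split; rewrite -lecR rmorphM /= Ey Ny mulr_sumr; apply: ler_sum => j _;
  have [r -> /eigab /andP[ar rb]] := spectral_diag_real_eigenvalue j;
  by apply: ler_wpM2r; rewrite ?mul_conjC_ge0 ?lecR.
Qed.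

End RealSymmetricMatrix.

Section GraphForms.
Variables (R : realType) (n : nat) (e : rel 'I_n).

Definition adj_form (x : 'I_n -> R) := \sum_i \sum_j (e i j)%:R * (x i * x j).
Definition sq_norm (x : 'I_n -> R) := \sum_i x i ^+ 2.

Lemma adj_form_mxE (x : 'I_n -> R) :
  ((\row_i x i) *m adjmx R e *m (\row_i x i)^T) 0 0 = adj_form x.
Proof.
rewrite mxE /adj_form exchange_big /=; apply: eq_bigr => j _.
rewrite !mxE big_distrl /=; apply: eq_bigr => i _; rewrite !mxE; ring.
Qed.

Lemma sq_norm_mxE (x : 'I_n -> R) : ((\row_i x i) *m (\row_i x i)^T) 0 0 = sq_norm x.
Proof. by rewrite mxE; apply: eq_bigr => i _; rewrite !mxE expr2. Qed.

Lemma sq_norm_gt0 (v : 'rV[R]_n) : v != 0 -> 0 < sq_norm (v 0).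
Proof.
move=> vnz; rewrite lt_def sumr_ge0 ?andbT; last by move=> i _; exact: sqr_ge0.
apply: contra vnz => /eqP /psumr_eq0P v0; apply/eqP/rowP => i; rewrite mxE.
by apply/eqP; rewrite -sqrf_eq0 v0 // => j _; exact: sqr_ge0.
Qed.

Lemma eigen_adj_form (r : R) (v : 'rV[R]_n) :
  v *m adjmx R e = r *: v -> adj_form (v 0) = r * sq_norm (v 0).
Proof.
have rowK : \row_i v 0 i = v by apply/rowP => i; rewrite mxE.
by move=> vA; rewrite -adj_form_mxE -sq_norm_mxE rowK vA -scalemxAl mxE.
Qed.

Hypothesis symE : symmetric e.

Lemma rayleigh_adj (lam tau : R) :
  greatest_eigenvalue (adjmx R e) lam -> least_eigenvalue (adjmx R e) tau ->
  forall x, tau * sq_norm x <= adj_form x <= lam * sq_norm x.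
Proof.
move=> [_ lam_max] [_ tau_min] x.
have symA : (adjmx R e)^T = adjmx R e by apply/matrixP => i j; rewrite !mxE symE.
rewrite -adj_form_mxE -sq_norm_mxE; apply: rayleigh_bounds => // r eig_r.
by rewrite tau_min ?lam_max.
Qed.

End GraphForms.

Lemma sumr_delta (R : nzRingType) n (F : 'I_n -> R) (u : 'I_n) :
  \sum_j F j * (j == u)%:R = F u.
Proof.
by rewrite (bigD1 u) //= eqxx mulr1 big1 ?addr0 // => j /negbTE ->; rewrite mulr0.
Qed.

Lemma least_adj_eigenvalue_le (R : realType) n (e : rel 'I_n) (tau : R) u v :
  simple_graph e -> e u v ->
  (forall x, tau * sq_norm x <= adj_form e x) -> tau <= -1.
Proof.
move=> [symE irrE] euv tau_min.
have uv : u != v by apply: contraTneq euv => ->; rewrite irrE.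
pose x i : R := (i == u)%:R - (i == v)%:R.
have sum_x (F : 'I_n -> R) : \sum_j F j * x j = F u - F v.
  by rewrite -!(sumr_delta F) -sumrB; apply: eq_bigr => j _; rewrite mulrBr.
have adj_x : adj_form e x = -2.
  rewrite /adj_form (eq_bigr (fun i => x i * ((e i u)%:R - (e i v)%:R))); last first.
    move=> i _; rewrite -(sum_x (fun j => (e i j)%:R)) big_distrr.
    by apply: eq_bigr => j _ /=; ring.
  rewrite (eq_bigr (fun i => ((e i u)%:R - (e i v)%:R) * x i)) => [|i _];
    last exact: mulrC.
  by rewrite sum_x !irrE (symE v u) euv /= ?mulr1n ?mulr0n; ring.
have norm_x : sq_norm x = 2.
  rewrite /sq_norm (eq_bigr (fun i => x i * x i)) => [|i _]; last exact: expr2.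
  rewrite sum_x /x !eqxx (negbTE uv) eq_sym (negbTE uv) /= ?mulr1n ?mulr0n; ring.
by have := tau_min x; rewrite adj_x norm_x; lra.
Qed.

Section LowerBound.
Variables (R : realType) (n : nat) (e : rel 'I_n) (tau : R).
Hypothesis tau_min : forall x, tau * sq_norm x <= adj_form e x.

Lemma adj_form_le_abs (x : 'I_n -> R) : adj_form e x <= adj_form e (fun i => `|x i|).
Proof.
apply: ler_sum => i _; apply: ler_sum => j _; apply: ler_wpM2l => //.
by rewrite -normrM ler_norm.
Qed.

Lemma sq_norm_abs (x : 'I_n -> R) : sq_norm (fun i => `|x i|) = sq_norm x.
Proof. by apply: eq_bigr => i _; rewrite real_normK ?num_real. Qed.

Lemma gram_adj_form_ge (a : 'I_n -> R) d (phi : 'I_n -> 'rV[R]_d) :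
  (forall u, dotv (phi u) (phi u) = 1) ->
  tau * sq_norm a <= \sum_i \sum_j (e i j)%:R * (a i * a j) * dotv (phi i) (phi j).
Proof.
move=> phi1; pose z (t : 'I_d) i := a i * phi i 0 t.
have -> : sq_norm a = \sum_t sq_norm (z t).
  rewrite /sq_norm exchange_big; apply: eq_bigr => i _ /=.
  rewrite -[LHS]mulr1 -(phi1 i) /dotv big_distrr.
  by apply: eq_bigr => t _; rewrite /z /=; ring.
have -> : \sum_i \sum_j (e i j)%:R * (a i * a j) * dotv (phi i) (phi j) =
          \sum_t adj_form e (z t).
  rewrite /adj_form [RHS]exchange_big; apply: eq_bigr => i _ /=.
  rewrite [RHS]exchange_big; apply: eq_bigr => j _ /=.
  by rewrite /dotv big_distrr; apply: eq_bigr => t _; rewrite /z /=; ring.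
by rewrite mulr_sumr; apply: ler_sum => t _.
Qed.

Lemma vec_colorable_ge (lam k : R) : tau < 0 ->
  eigenvalue (adjmx R e) lam -> vec_colorable e k -> 1 - lam / tau <= k.
Proof.
move=> tau_lt0 /eigenvalueP[v vA vnz] [k_gt1 [d [phi [phi1 phi_edge]]]].
pose a i := `|v 0 i|; pose c := - (k - 1)^-1.
have k1_gt0 : 0 < k - 1 by rewrite subr_gt0.
have c_lt0 : c < 0 by rewrite oppr_lt0 invr_gt0.
have norm_a : sq_norm a = sq_norm (v 0) by exact: sq_norm_abs.
have gram_le : \sum_i \sum_j (e i j)%:R * (a i * a j) * dotv (phi i) (phi j)
               <= c * adj_form e a.
  rewrite mulr_sumr; apply: ler_sum => i _; rewrite mulr_sumr; apply: ler_sum => j _.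
  case eij : (e i j); last by rewrite !mul0r mulr0.
  rewrite mul1r mulrC; apply: ler_wpM2r; last exact: phi_edge.
  exact: mulr_ge0 (normr_ge0 _) (normr_ge0 _).
have adj_a : c * adj_form e a <= c * (lam * sq_norm a).
  by rewrite ler_nM2l // norm_a -(eigen_adj_form vA) adj_form_le_abs.
have tau_le : tau <= c * lam.
  rewrite -(ler_pM2r (sq_norm_gt0 vnz)) -norm_a -mulrA.
  by apply: le_trans adj_a; apply: le_trans gram_le; exact: gram_adj_form_ge.
have : - lam / tau <= k - 1.
  by rewrite ler_ndivrMr // -ler_pdivlMl // mulrN -mulNr.
by rewrite mulNr; lra.
Qed.

End LowerBound.

Section AutomorphismAverage.
Variables (R : realType) (n : nat) (e : rel 'I_n).

Definition graph_autb (s : {perm 'I_n}) : bool :=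
  [forall u, forall v, e (s u) (s v) == e u v].

Lemma graph_autP s : reflect (graph_aut e s) (graph_autb s).
Proof.
apply: (iffP idP) => [/forallP aut_s u v | aut_s].
  by have /forallP/(_ v)/eqP := aut_s u.
by apply/forallP => u; apply/forallP => v; rewrite aut_s.
Qed.

Lemma graph_autb1 : graph_autb 1%g.
Proof. by apply/graph_autP => u v; rewrite !perm1. Qed.

Lemma graph_autbM g s : graph_autb g -> graph_autb (g * s)%g = graph_autb s.
Proof.
move/graph_autP => aut_g; apply/graph_autP/graph_autP => aut_s u v.
  have := aut_s (g^-1 u)%g (g^-1 v)%g; rewrite !permM !permKV => ->.
  by rewrite -aut_g !permKV.
by rewrite !permM aut_s aut_g.
Qed.

Lemma adj_form_aut (x : 'I_n -> R) s : graph_autb s -> adj_form e (x \o s) = adj_form e x.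
Proof.
move/graph_autP => aut_s; rewrite /adj_form [RHS](reindex_inj (@perm_inj _ s)) /=.
apply: eq_bigr => i _; rewrite [RHS](reindex_inj (@perm_inj _ s)) /=.
by apply: eq_bigr => j _; rewrite aut_s.
Qed.

Lemma sq_norm_perm (x : 'I_n -> R) (s : {perm 'I_n}) : sq_norm (x \o s) = sq_norm x.
Proof. by rewrite /sq_norm [RHS](reindex_inj (@perm_inj _ s)). Qed.

Variable w : 'I_n -> R.

Definition aut_gram u v := \sum_(s | graph_autb s) w (s u) * w (s v).

Lemma aut_gramC u v : aut_gram u v = aut_gram v u.
Proof. by apply: eq_bigr => s _; rewrite mulrC. Qed.

Lemma aut_gram_ge0 u : 0 <= aut_gram u u.
Proof. by apply: sumr_ge0 => s _; rewrite -expr2 sqr_ge0. Qed.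

Lemma aut_gram_aut g u v : graph_autb g -> aut_gram (g u) (g v) = aut_gram u v.
Proof.
move=> aut_g; rewrite /aut_gram [RHS](reindex_inj (mulgI g)) /=.
by apply: eq_big => [s | s _]; rewrite ?graph_autbM ?permM.
Qed.

Lemma aut_gram_eq0 u v : aut_gram u u = 0 -> aut_gram u v = 0.
Proof.
move=> Fuu0; have wsu0 : forall s, graph_autb s -> w (s u) * w (s u) = 0.
  by apply: psumr_eq0P Fuu0 => s _; rewrite -expr2 sqr_ge0.
by apply: big1 => s /wsu0/eqP; rewrite mulf_eq0 orbb => /eqP ->; rewrite mul0r.
Qed.

Lemma aut_gram_adj_sum :
  \sum_u \sum_v (e u v)%:R * aut_gram u v = \sum_(s | graph_autb s) adj_form e w.
Proof.
under [RHS]eq_bigr => s aut_s do rewrite -(adj_form_aut w aut_s).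
rewrite [RHS]exchange_big; apply: eq_bigr => u _ /=.
by rewrite [RHS]exchange_big; apply: eq_bigr => v _; rewrite /aut_gram big_distrr.
Qed.

Lemma aut_gram_trace : \sum_u aut_gram u u = \sum_(s | graph_autb s) sq_norm w.
Proof.
under [RHS]eq_bigr => s _ do rewrite -(sq_norm_perm w s).
rewrite exchange_big; apply: eq_bigr => s _; apply: eq_bigr => u _.
by rewrite expr2.
Qed.

Definition aut_gram_vec u : 'rV[R]_#|{perm 'I_n}| :=
  \row_i (if graph_autb (enum_val i) then w (enum_val i u) else 0).

Lemma dotv_aut_gram_vec u v : dotv (aut_gram_vec u) (aut_gram_vec v) = aut_gram u v.
Proof.
rewrite /dotv /aut_gram.
transitivity (\sum_(s in {perm 'I_n}) if graph_autb s then w (s u) * w (s v) else 0).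
  rewrite [RHS]big_enum_val; apply: eq_bigr => i _; rewrite !mxE.
  by case: ifP; rewrite ?mulr0.
by rewrite [RHS]big_mkcond; apply: eq_bigl => s; rewrite inE.
Qed.

End AutomorphismAverage.

Lemma dotvZ (R : realType) d (a b : R) (x y : 'rV[R]_d) :
  dotv (a *: x) (b *: y) = a * b * dotv x y.
Proof. by rewrite /dotv mulr_sumr; apply: eq_bigr => i _; rewrite !mxE; ring. Qed.

Lemma strict_vec_colorable_vec (R : realType) n (e : rel 'I_n) (k : R) :
  strict_vec_colorable e k -> vec_colorable e k.
Proof.
move=> [k_gt1 [d [phi [phi1 phi_edge]]]]; split=> //.
by exists d, phi; split=> // u v /phi_edge ->.
Qed.

Lemma strict_vec_colorable_of_gram (R : realType) n (e : rel 'I_n) d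
    (psi : 'I_n -> 'rV[R]_d) (beta : R) u0 v0 :
  beta < 0 -> e u0 v0 ->
  (forall x y, e x y -> [/\ 0 < dotv (psi x) (psi x), 0 < dotv (psi y) (psi y) &
     dotv (psi x) (psi y) =
       beta * (Num.sqrt (dotv (psi x) (psi x)) * Num.sqrt (dotv (psi y) (psi y)))]) ->
  strict_vec_colorable e (1 - beta^-1).
Proof.
move=> beta_lt0 eu0v0 gram.
pose len x := Num.sqrt (dotv (psi x) (psi x)).
have len_gt0 x : 0 < dotv (psi x) (psi x) -> 0 < len x by rewrite sqrtr_gt0.
(* Vertices without edges are unconstrained: they reuse the vector of [u0]. *)
pose pick x := if 0 < dotv (psi x) (psi x) then x else u0.
have pick_gt0 x : 0 < dotv (psi (pick x)) (psi (pick x)).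
  by rewrite /pick; case: ifP => // _; case: (gram _ _ eu0v0).
split; first by rewrite ltrDl oppr_gt0 invr_lt0.
exists d, (fun x => (len (pick x))^-1 *: psi (pick x)); split=> [x | x y exy].
  rewrite dotvZ -[dotv _ _]sqr_sqrtr ?ltW // -/(len _).
  by field; rewrite gt_eqF ?len_gt0.
have [x_gt0 y_gt0 gram_xy] := gram x y exy.
rewrite /pick x_gt0 y_gt0 dotvZ gram_xy -/(len x) -/(len y).
rewrite addrAC subrr add0r invrN invrK opprK.
by field; rewrite !gt_eqF ?len_gt0.
Qed.

(* An automorphism may swap the endpoints of the edge, so only the product of
   the two diagonal entries is invariant. *)
Lemma aut_gram_edge (R : realType) n (e : rel 'I_n) (w : 'I_n -> R) u0 v0 x y :
  edge_transitive e -> e u0 v0 -> e x y ->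
  aut_gram e w x y = aut_gram e w u0 v0 /\
  aut_gram e w x x * aut_gram e w y y = aut_gram e w u0 u0 * aut_gram e w v0 v0.
Proof.
move=> edge_tr eu0v0 exy.
have [s [/graph_autP aut_s [[<- <-] | [<- <-]]]] := edge_tr _ _ _ _ eu0v0 exy.
  by rewrite !aut_gram_aut.
by rewrite !aut_gram_aut // aut_gramC mulrC.
Qed.

Definition gram_cos (R : realType) n (F : 'I_n -> 'I_n -> R) u v :=
  F u v / Num.sqrt (F u u * F v v).

Section UpperBound.
Variables (R : realType) (n : nat) (e : rel 'I_n) (lam tau : R) (u0 v0 : 'I_n).
Variable w : 'rV[R]_n.
Hypotheses (edge_tr : edge_transitive e) (eu0v0 : e u0 v0).
Hypothesis lam_max : forall x, adj_form e x <= lam * sq_norm x.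
Hypotheses (tau_lt0 : tau < 0) (wA : w *m adjmx R e = tau *: w) (w_neq0 : w != 0).

Local Notation F := (aut_gram e (w 0)).
Local Notation beta := (gram_cos F u0 v0).

Lemma aut_gram_adj_sum_eigen :
  \sum_u \sum_v (e u v)%:R * F u v = tau * \sum_u F u u.
Proof.
rewrite aut_gram_adj_sum aut_gram_trace mulr_sumr.
by apply: eq_bigr => s _; rewrite (eigen_adj_form wA).
Qed.

Lemma aut_gram_trace_gt0 : 0 < \sum_u F u u.
Proof.
rewrite aut_gram_trace (bigD1 1%g) ?graph_autb1 //= ltr_pwDl ?sq_norm_gt0 //.
by apply: sumr_ge0 => s _; rewrite ltW ?sq_norm_gt0.
Qed.

Lemma aut_gram_edge_lt0 : F u0 v0 < 0.
Proof.
have edge_sum : \sum_u \sum_v (e u v)%:R * F u v = F u0 v0 * \sum_u \sum_v (e u v)%:R.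
  rewrite mulr_sumr; apply: eq_bigr => u _; rewrite mulr_sumr; apply: eq_bigr => v _.
  case euv : (e u v); last by rewrite !mul0r mulr0.
  by rewrite mul1r mulr1 (aut_gram_edge _ edge_tr eu0v0 euv).1.
have edges_ge0 : 0 <= \sum_u \sum_v (e u v)%:R :> R.
  by apply: sumr_ge0 => u _; exact: sumr_ge0.
have : F u0 v0 * \sum_u \sum_v (e u v)%:R < 0.
  by rewrite -edge_sum aut_gram_adj_sum_eigen nmulr_rlt0 // aut_gram_trace_gt0.
move=> prod_lt0; rewrite ltNge; apply: contraTN prod_lt0 => c0_ge0.
by rewrite -leNgt mulr_ge0.
Qed.

Lemma aut_gram_diag_gt0 x y : e x y -> 0 < F x x /\ 0 < F y y.
Proof.
have diag_gt0 u v : F u v < 0 -> 0 < F u u.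
  move=> Fuv_lt0; rewrite lt_def aut_gram_ge0 andbT.
  by apply: contraTneq Fuv_lt0 => /aut_gram_eq0 ->; rewrite ltxx.
have Fu0_gt0 := diag_gt0 _ _ aut_gram_edge_lt0.
have Fv0_gt0 : 0 < F v0 v0.
  by apply: (diag_gt0 _ u0); rewrite aut_gramC aut_gram_edge_lt0.
move=> exy; have := mulr_gt0 Fu0_gt0 Fv0_gt0.
rewrite -(aut_gram_edge _ edge_tr eu0v0 exy).2 lt_def mulf_eq0 negb_or.
case/andP=> /andP[Fxx_neq0 Fyy_neq0] _.
by rewrite !lt_def Fxx_neq0 Fyy_neq0 !aut_gram_ge0.
Qed.

Lemma aut_gram_cos_lt0 : beta < 0.
Proof.
have [Fu0_gt0 Fv0_gt0] := aut_gram_diag_gt0 eu0v0.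
by rewrite pmulr_llt0 ?invr_gt0 ?sqrtr_gt0 ?mulr_gt0 // aut_gram_edge_lt0.
Qed.

Lemma aut_gram_edgeE x y : e x y ->
  F x y = beta * (Num.sqrt (F x x) * Num.sqrt (F y y)).
Proof.
move=> exy; have [Fu0_gt0 Fv0_gt0] := aut_gram_diag_gt0 eu0v0.
have [-> diag_prod] := aut_gram_edge (w 0) edge_tr eu0v0 exy.
rewrite -sqrtrM ?aut_gram_ge0 // diag_prod divfK //.
by rewrite gt_eqF ?sqrtr_gt0 ?mulr_gt0.
Qed.

Lemma aut_gram_cos_mul_le : beta * lam <= tau.
Proof.
pose sq u := Num.sqrt (F u u).
have norm_sq : sq_norm sq = \sum_u F u u.
  by apply: eq_bigr => u _; rewrite sqr_sqrtr ?aut_gram_ge0.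
have adj_sq : beta * adj_form e sq = tau * sq_norm sq.
  rewrite norm_sq -aut_gram_adj_sum_eigen mulr_sumr; apply: eq_bigr => u _.
  rewrite mulr_sumr; apply: eq_bigr => v _.
  case euv : (e u v); last by rewrite !mul0r mulr0.
  by rewrite !mul1r aut_gram_edgeE.
have norm_sq_gt0 : 0 < sq_norm sq by rewrite norm_sq aut_gram_trace_gt0.
rewrite -(ler_pM2r norm_sq_gt0) -adj_sq.
by rewrite -mulrA ler_nM2l ?aut_gram_cos_lt0 ?lam_max.
Qed.

Lemma strict_vec_colorable_aut_gram : strict_vec_colorable e (1 - beta^-1).
Proof.
apply: (strict_vec_colorable_of_gram (psi := aut_gram_vec e (w 0)))
  aut_gram_cos_lt0 eu0v0 _ => x y exy.
have [Fxx_gt0 Fyy_gt0] := aut_gram_diag_gt0 exy.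
by rewrite !dotv_aut_gram_vec; split=> //; exact: aut_gram_edgeE.
Qed.

End UpperBound.

Theorem corollary5p3 (R : realType) (n : nat) (e : rel 'I_n)
    (lambda tau : R) :
  simple_graph e ->
  edge_transitive e ->
  (exists u v, e u v) ->
  greatest_eigenvalue (adjmx R e) lambda ->
  least_eigenvalue (adjmx R e) tau ->
  vec_chromatic_number_is e (1 - lambda / tau) /\
  strict_vec_chromatic_number_is e (1 - lambda / tau).
Proof.
move=> simple_e edge_tr [u0 [v0 eu0v0]] lam_greatest tau_least.
have [tau_min lam_max] : (forall x, tau * sq_norm x <= adj_form e x) /\
                         (forall x, adj_form e x <= lambda * sq_norm x).
  by split=> x; case/andP: (rayleigh_adj simple_e.1 lam_greatest tau_least x).
have tau_lt0 : tau < 0.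
  by have := least_adj_eigenvalue_le simple_e eu0v0 tau_min; lra.
have lower k : vec_colorable e k -> 1 - lambda / tau <= k :=
  vec_colorable_ge tau_min tau_lt0 (proj1 lam_greatest).
have [/eigenvalueP[w wA w_neq0] _] := tau_least.
have strict := strict_vec_colorable_aut_gram edge_tr eu0v0 tau_lt0 wA w_neq0.
have beta_lt0 := aut_gram_cos_lt0 edge_tr eu0v0 tau_lt0 wA w_neq0.
have beta_lam := aut_gram_cos_mul_le edge_tr eu0v0 lam_max tau_lt0 wA w_neq0.
set beta := gram_cos _ u0 v0 in strict beta_lt0 beta_lam; set k0 := 1 - _ in strict.
have k0E : k0 = 1 - lambda / tau.
  apply/le_anti/andP; split; last exact/lower/strict_vec_colorable_vec.
  by rewrite lerD2l lerN2 ler_ndivrMr // ler_ndivrMl.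
rewrite -k0E; split; split=> //.
- exact: strict_vec_colorable_vec.
- by move=> k /lower; rewrite k0E.
- by move=> k /strict_vec_colorable_vec/lower; rewrite k0E.
Qed.
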